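(* Let $X$ be a nonempty set, $f:X\to X$ a function, and $\tau_2$ the fuzzy topology on $X$ defined below. Then $(X,\tau_2)$ is regular if and only if $f$ is onto.
   Context: A fuzzy subset of $X$ is a function $\mu:X\to[0,1]$; union is the pointwise supremum, intersection the pointwise minimum, complement $1-\mu$; $\emptyset$ is the constant $0$ and $X$ the constant $1$. A fuzzy topology is a family of fuzzy subsets containing $\emptyset$ and $X$, closed under arbitrary unions and finite intersections; complements of open fuzzy sets are closed; the topology generated by a base $\mathbb{B}$ consists of $\emptyset$ and all unions of subfamilies of $\mathbb{B}$. $\mathbb{N}=\{1,2,\dots\}$, $f^0=\mathrm{id}_X$, $f^{n+1}=f^n\circ f$. Definition of $\tau_2$: $J_0=\bigcap_{n\in\mathbb{N}} f^n(X)$, $J_n=f^{n-1}(X)\setminus f^n(X)$ for $n\in\mathbb{N}$; for $m\in\mathbb{N}$, $\mu_{K_m}(x)=\min\{1,n/m\}$ if $x\in J_n$ with $n\ge1$, and $\mu_{K_m}(x)=1$ otherwise; $\tau_2$ is generated by the base $\{K_m:m\in\mathbb{N}\}$. A fuzzy point $x_p$ ($x\in X$, $0<p\le1$) belongs to a fuzzy set $F$ iff $p\le\mu_F(x)$. The space is regular if for every fuzzy point $x_p$ and every closed fuzzy set $F$ with $x_p\notin F$ there exist open fuzzy sets $U,V$ with $x_p\in U$, $F\subseteq V$ and $U\cap V=\emptyset$. *)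

(* fuzzy sets are functions X -> R (values in [0,1]). *)
From Stdlib Require Import Reals Classical ClassicalEpsilon.
Open Scope R_scope.

Definition fuzzy (X : Type) := X -> R.

Definition in_image {X : Type} (f : X -> X) (n : nat) (x : X) : Prop :=
  exists y, Nat.iter n f y = x.

(* J_n = f^(n-1)(X) \ f^n(X), for n >= 1 *)
Definition in_J {X : Type} (f : X -> X) (n : nat) (x : X) : Prop :=
  in_image f (n - 1) x /\ ~ in_image f n x.

(* mu_{K_m}(x) = min{1, n/m} if x in J_n with n >= 1, and 1 otherwise *)
Definition K {X : Type} (f : X -> X) (m : nat) : fuzzy X :=
  fun x =>
    match excluded_middle_informative (exists n, (1 <= n)%nat /\ in_J f n x) with
    | left H =>
        let n := proj1_sig (constructive_indefinite_description _ H) in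
        Rmin 1 (INR n / INR m)
    | right _ => 1
    end.

(* Open sets of tau_2: the empty fuzzy set, and all unions (pointwise suprema)
   of subfamilies {K_m : m in S} (S a set of indices m >= 1) of the base. *)
Definition tau2_open {X : Type} (f : X -> X) (U : fuzzy X) : Prop :=
  (forall x, U x = 0) \/
  exists S : nat -> Prop,
    forall x, is_lub (fun r => exists m, (1 <= m)%nat /\ S m /\ r = K f m x) (U x).

Definition tau2_closed {X : Type} (f : X -> X) (F : fuzzy X) : Prop :=
  tau2_open f (fun x => 1 - F x).

Definition fpoint_in {X : Type} (x : X) (p : R) (F : fuzzy X) : Prop := p <= F x.

Definition fsubset {X : Type} (A B : fuzzy X) : Prop := forall x, A x <= B x.

Definition fdisjoint {X : Type} (A B : fuzzy X) : Prop := forall x, Rmin (A x) (B x) = 0.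

Definition tau2_regular {X : Type} (f : X -> X) : Prop :=
  forall (x : X) (p : R) (F : fuzzy X),
    0 < p <= 1 -> tau2_closed f F -> ~ fpoint_in x p F ->
    exists U V : fuzzy X,
      tau2_open f U /\ tau2_open f V /\
      fpoint_in x p U /\ fsubset F V /\ fdisjoint U V.

(* The sets J_n are pairwise disjoint, so K_m(x) = min(1, n/m) for x in J_n.
   If y is not in the range of f, then y lies in J_1 and K_2(y) = 1/2, so the
   closed set 1 - K_2 misses the fuzzy point y_1 while taking the value 1/2
   at y; open sets U containing y_1 and V containing 1 - K_2 would then satisfy
   min(U(y), V(y)) >= 1/2, so they cannot be disjoint.
   If f is onto, all J_n with n >= 1 are empty, every K_m is the constant 1,
   and tau_2 is the indiscrete topology {0, 1}, which is trivially regular. *)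
From Stdlib Require Import Reals Lra Lia Classical ClassicalEpsilon
  FunctionalExtensionality.
Open Scope R_scope.

Lemma is_lub_inhabited (E : R -> Prop) (l : R) : is_lub E l -> exists r, E r.
Proof.
  intros [_ Hleast]. apply NNPP. intros Hempty.
  enough (l <= l - 1) by lra.
  apply Hleast. intros r Hr. exfalso. apply Hempty. now exists r.
Qed.

Section FuzzyTopology.
Variables (X : Type) (f : X -> X).

Lemma in_image_S n x : in_image f (S n) x -> in_image f n x.
Proof.
  intros [y Hy]. exists (f y). now rewrite <- Nat.iter_succ_r.
Qed.

Lemma in_image_antitone n k x : (n <= k)%nat -> in_image f k x -> in_image f n x.
Proof.
  intros Hle. induction Hle as [|k' _ IH]; auto using in_image_S.
Qed.

Lemma in_J_unique n k x : in_J f n x -> in_J f k x -> n = k.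
Proof.
  intros [Hn_img Hn_out] [Hk_img Hk_out].
  destruct (Nat.lt_total n k) as [Hlt | [Heq | Hgt]]; [exfalso | exact Heq | exfalso].
  - apply Hn_out. apply (in_image_antitone _ (k - 1)); [lia | exact Hk_img].
  - apply Hk_out. apply (in_image_antitone _ (n - 1)); [lia | exact Hn_img].
Qed.

Lemma K_in_J m n x : in_J f n x -> (1 <= n)%nat -> K f m x = Rmin 1 (INR n / INR m).
Proof.
  intros HJ Hn. unfold K.
  destruct excluded_middle_informative as [H | H].
  - destruct (constructive_indefinite_description _ H) as [k [Hk HJk]]; simpl.
    now rewrite (in_J_unique k n x HJk HJ).
  - exfalso. apply H. now exists n.
Qed.

Lemma tau2_open_K m : (1 <= m)%nat -> tau2_open f (K f m).
Proof.
  intros Hm. right. exists (fun k => k = m). intros x. split.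
  - intros r [k [_ [-> ->]]]. lra.
  - intros b Hb. apply Hb. now exists m.
Qed.

Lemma tau2_closed_compl_K m : (1 <= m)%nat -> tau2_closed f (fun x => 1 - K f m x).
Proof.
  intros Hm. unfold tau2_closed.
  replace (fun x => 1 - (1 - K f m x)) with (K f m)
    by (apply functional_extensionality; intros; ring).
  now apply tau2_open_K.
Qed.

Lemma not_in_range_in_J1 y : ~ (exists x, f x = y) -> in_J f 1 y.
Proof.
  intros Hy. split.
  - now exists y.
  - intros [x Hx]. apply Hy. now exists x.
Qed.

Lemma tau2_regular_surjective : tau2_regular f -> forall y, exists x, f x = y.
Proof.
  intros Hreg y. apply NNPP. intros Hy.
  assert (HK : K f 2 y = / 2).
  { rewrite (K_in_J 2 1 y (not_in_range_in_J1 y Hy)) by lia.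
    simpl. unfold Rmin. destruct Rle_dec; lra. }
  destruct (Hreg y 1 (fun x => 1 - K f 2 x)) as (U & V & _ & _ & HUy & HFV & Hdisj).
  - lra.
  - apply tau2_closed_compl_K; lia.
  - unfold fpoint_in. lra.
  - specialize (HFV y). specialize (Hdisj y). unfold fpoint_in in HUy.
    simpl in HFV. rewrite HK in HFV. unfold Rmin in Hdisj. destruct Rle_dec; lra.
Qed.

Hypothesis f_surjective : forall y, exists x, f x = y.

Lemma in_image_surjective n x : in_image f n x.
Proof.
  revert x. induction n as [|n IH]; intros x.
  - now exists x.
  - destruct (f_surjective x) as [z <-]. destruct (IH z) as [y <-].
    exists y. reflexivity.
Qed.

Lemma K_surjective m : K f m = fun _ => 1.
Proof.
  apply functional_extensionality. intros x. unfold K.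
  destruct excluded_middle_informative as [H | _]; [exfalso | reflexivity].
  destruct H as [n [_ [_ Hout]]]. apply Hout, in_image_surjective.
Qed.

Lemma tau2_open_surjective U : tau2_open f U -> (forall x, U x = 0) \/ (forall x, U x = 1).
Proof.
  intros [Hzero | [S HS]]; [now left | right]. intros x.
  destruct (is_lub_inhabited _ _ (HS x)) as [r Hr].
  apply Rle_antisym.
  - apply (HS x). intros s [k [_ [_ ->]]]. rewrite K_surjective. lra.
  - destruct Hr as [m [Hm [Hsm _]]].
    replace 1 with (K f m x) by now rewrite K_surjective.
    apply (HS x). now exists m.
Qed.

Lemma surjective_tau2_regular : tau2_regular f.
Proof.
  intros x p F Hp HF Hx. unfold fpoint_in in Hx.
  destruct (tau2_open_surjective _ HF) as [F1 | F0].
  - specialize (F1 x). simpl in F1. lra.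
  - exists (fun _ => 1), (fun _ => 0). repeat split.
    + rewrite <- (K_surjective 1). apply tau2_open_K; lia.
    + now left.
    + unfold fpoint_in. lra.
    + intros y. specialize (F0 y). simpl in F0. lra.
    + intros y. unfold Rmin. destruct Rle_dec; lra.
Qed.

End FuzzyTopology.

Theorem proposition3p10 (X : Type) (f : X -> X) (HX : inhabited X) :
  tau2_regular f <-> (forall y : X, exists x : X, f x = y).
Proof.
  split.
  - apply tau2_regular_surjective.
  - apply surjective_tau2_regular.
Qed.
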